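(* Let $(\mathcal{L},[\cdot,\cdot,\cdot]_{\mathcal{L}})$ be a (right) $3$-Leibniz algebra over a field $\mathbb{K}$ and let $\overline{\mathcal{L}}=\mathbb{K}\oplus\mathcal{L}$ with coalgebra structure $\Delta(a,x)=(a,x)\otimes(1,0)+(1,0)\otimes(0,x)$, $\varepsilon(a,x)=a$. Define the linear map $T:\overline{\mathcal{L}}^{\otimes3}\to\overline{\mathcal{L}}$ by $T((a,x),(b,y),(c,z))=(abc,\,bcx+[x,y,z]_{\mathcal{L}})$. Then $(\overline{\mathcal{L}},T)$ is a trilinear rack.
   Context: A (right) $3$-Leibniz algebra is a vector space $\mathcal{L}$ with a trilinear map $[\cdot,\cdot,\cdot]_{\mathcal{L}}$ such that $[[x_1,x_2,x_3]_{\mathcal{L}},y_1,y_2]_{\mathcal{L}}=[[x_1,y_1,y_2]_{\mathcal{L}},x_2,x_3]_{\mathcal{L}}+[x_1,[x_2,y_1,y_2]_{\mathcal{L}},x_3]_{\mathcal{L}}+[x_1,x_2,[x_3,y_1,y_2]_{\mathcal{L}}]_{\mathcal{L}}$ for all entries. $(\overline{\mathcal{L}},\Delta,\varepsilon)$ is a cocommutative coassociative counital coalgebra; Sweedler notation $\Delta(u)=u_{(1)}\otimes u_{(2)}$, $(\Delta\otimes\mathrm{Id})\Delta(u)=u_{(1)}\otimes u_{(2)}\otimes u_{(3)}$; $\overline{\mathcal{L}}^{\otimes3}$ has the tensor product coalgebra structure. A coalgebra morphism $f$ satisfies $\Delta'\circ f=(f\otimes f)\circ\Delta$, $\varepsilon'\circ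 f=\varepsilon$. A trilinear shelf is a coalgebra $\mathcal{C}$ with a coalgebra morphism $T:\mathcal{C}^{\otimes3}\to\mathcal{C}$ such that $T(T(x,y,z),u,v)=T(T(x,u_{(1)},v_{(1)}),T(y,u_{(2)},v_{(2)}),T(z,u_{(3)},v_{(3)}))$; it is a trilinear rack if there exists a trilinear shelf structure $\widetilde{T}$ on $\mathcal{C}$ with $\widetilde{T}(T(x,y_{(2)},z_{(2)}),z_{(1)},y_{(1)})=\varepsilon(y)\varepsilon(z)x=T(\widetilde{T}(x,y_{(2)},z_{(2)}),z_{(1)},y_{(1)})$ for all $x,y,z$. *)

From HB Require Import structures.
From mathcomp Require Import all_boot all_order all_algebra.
Set Implicit Arguments. Unset Strict Implicit. Unset Printing Implicit Defensive.
Import GRing.Theory.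
Local Open Scope ring_scope.

(* Tensor products are not in the library; an element of C (x) C is encoded
   as a finite list of pairs  s = [:: (a_1,b_1); ...]  standing for
   sum_i a_i (x) b_i, and two such elements are equal iff every bilinear form
   C x C -> K takes the same value on them (bilinear forms separate points of
   C (x) C for vector spaces over a field).  Likewise for C (x) C (x) C with
   trilinear forms.  A comultiplication is a map  cop : C -> seq (C * C),
   cop u = [:: (u_(1), u_(2)) ...] in Sweedler notation.
   A linear map C^{(x)3} -> C is encoded as a trilinear map C -> C -> C -> C. *)

Section Defs.
Variables (K : fieldType) (C : lmodType K).

Definition linmap (V : lmodType K) (f : C -> V) :=
  forall (a : K) (u v : C), f (a *: u + v) = a *: f u + f v.

Definition linform (f : C -> K) :=
  forall (a : K) (u v : C), f (a *: u + v) = a * f u + f v.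

Definition bilinform (b : C -> C -> K) :=
  (forall y, linform (fun x => b x y)) /\ (forall x, linform (b x)).

Definition trilinform (g : C -> C -> C -> K) :=
  (forall y z, linform (fun x => g x y z)) /\
  (forall x z, linform (fun y => g x y z)) /\
  (forall x y, linform (g x y)).

Definition trilinmap (V : lmodType K) (f : C -> C -> C -> V) :=
  (forall y z, linmap (fun x => f x y z)) /\
  (forall x z, linmap (fun y => f x y z)) /\
  (forall x y, linmap (f x y)).

Definition tev2 (b : C -> C -> K) (s : seq (C * C)) : K :=
  \sum_(p <- s) b p.1 p.2.

(* (Delta (x) id) Delta u, as a list of triples (u_(1), u_(2), u_(3)) *)
Definition cop2 (cop : C -> seq (C * C)) (u : C) : seq (C * C * C) :=
  flatten [seq [seq (q.1, q.2, p.2) | q <- cop p.1] | p <- cop u].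

(* (id (x) Delta) Delta u *)
Definition cop2' (cop : C -> seq (C * C)) (u : C) : seq (C * C * C) :=
  flatten [seq [seq (p.1, q.1, q.2) | q <- cop p.2] | p <- cop u].

Definition tev3 (g : C -> C -> C -> K) (s : seq (C * C * C)) : K :=
  \sum_(p <- s) g p.1.1 p.1.2 p.2.

Definition is_cocom_coalgebra (cop : C -> seq (C * C)) (eps : C -> K) :=
  [/\
      forall b, bilinform b -> forall (a : K) (u v : C),
        tev2 b (cop (a *: u + v)) = a * tev2 b (cop u) + tev2 b (cop v),
      linform eps,
      forall g, trilinform g -> forall u, tev3 g (cop2 cop u) = tev3 g (cop2' cop u),
      (forall u, \sum_(p <- cop u) eps p.1 *: p.2 = u) /\
      (forall u, \sum_(p <- cop u) eps p.2 *: p.1 = u)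
    &
      forall b, bilinform b -> forall u,
        tev2 b (cop u) = tev2 b [seq (p.2, p.1) | p <- cop u]].

(* T : C^{(x)3} -> C is a coalgebra morphism, C^{(x)3} carrying the tensor
   product coalgebra structure (checked on pure tensors, T being linear). *)
Definition is_coalg_morph3 (cop : C -> seq (C * C)) (eps : C -> K)
    (T : C -> C -> C -> C) :=
  [/\ trilinmap T,
      forall x y z, eps (T x y z) = eps x * eps y * eps z
    & forall b, bilinform b -> forall x y z,
        tev2 b (cop (T x y z)) =
        \sum_(px <- cop x) \sum_(py <- cop y) \sum_(pz <- cop z)
           b (T px.1 py.1 pz.1) (T px.2 py.2 pz.2)].

Definition is_trilinear_shelf (cop : C -> seq (C * C)) (eps : C -> K)
    (T : C -> C -> C -> C) :=
  [/\ is_cocom_coalgebra cop eps,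
      is_coalg_morph3 cop eps T
    & forall x y z u v,
        T (T x y z) u v =
        \sum_(pu <- cop2 cop u) \sum_(pv <- cop2 cop v)
          T (T x pu.1.1 pv.1.1) (T y pu.1.2 pv.1.2) (T z pu.2 pv.2)].

Definition is_trilinear_rack (cop : C -> seq (C * C)) (eps : C -> K)
    (T : C -> C -> C -> C) :=
  is_trilinear_shelf cop eps T /\
  exists Tt : C -> C -> C -> C,
    is_trilinear_shelf cop eps Tt /\
    forall x y z,
      (\sum_(py <- cop y) \sum_(pz <- cop z) Tt (T x py.2 pz.2) pz.1 py.1
         = (eps y * eps z) *: x) /\
      (\sum_(py <- cop y) \sum_(pz <- cop z) T (Tt x py.2 pz.2) pz.1 py.1
         = (eps y * eps z) *: x).

End Defs.

Section Leibniz.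
Variables (K : fieldType) (L : lmodType K).

Definition trilin_L (br : L -> L -> L -> L) :=
  (forall y z, linear (fun x => br x y z)) /\
  (forall x z, linear (fun y => br x y z)) /\
  (forall x y, linear (br x y)).

Definition is_3Leibniz (br : L -> L -> L -> L) :=
  trilin_L br /\
  forall x1 x2 x3 y1 y2,
    br (br x1 x2 x3) y1 y2 =
    br (br x1 y1 y2) x2 x3 + br x1 (br x2 y1 y2) x3 + br x1 x2 (br x3 y1 y2).

Definition Lbar : lmodType K := (K^o * L)%type.

Definition Lbar_cop (u : Lbar) : seq (Lbar * Lbar) :=
  [:: (u, ((1 : K^o), (0 : L)) : Lbar); ((((1 : K^o), (0 : L)) : Lbar), (((0 : K^o), u.2) : Lbar))].

Definition Lbar_eps (u : Lbar) : K := u.1.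

Definition Lbar_T (br : L -> L -> L -> L) (u v w : Lbar) : Lbar :=
  ((u.1 * v.1 * w.1 : K^o), (v.1 * w.1) *: u.2 + br u.2 v.2 w.2).

End Leibniz.

From HB Require Import structures.
From mathcomp Require Import all_boot all_order all_algebra.
From mathcomp Require Import ring.

(* The coproduct only produces the
   group-like element (1,0) and the primitive elements (0,x), so every Sweedler
   sum collapses to a few terms, most of which vanish by trilinearity.  In the
   self-distributivity of T the only term not matched on sight is
   [[x,y,z],u,v], and the right 3-Leibniz identity is exactly its expansion.
   The inverse operation is T built on the opposite bracket -[x,z,y], again a
   3-Leibniz bracket; in the rack identities the two brackets cancel. *)

Set Implicit Arguments.
Unset Strict Implicit.
Unset Printing Implicit Defensive.
Import GRing.Theory.
Local Open Scope ring_scope.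

Section LinearFunctions.
Variables (R : pzRingType) (U V : lmodType R) (f : U -> V).
Hypothesis f_lin : linear f.

Let F : {linear U -> V} := HB.pack f (GRing.isLinear.Build R U V *:%R f f_lin).

Lemma lin0 : f 0 = 0. Proof. exact: linear0 F. Qed.
Lemma linD : {morph f : x y / x + y}. Proof. exact: linearD F. Qed.
Lemma linZ a : {morph f : x / a *: x}. Proof. exact: linearZZ F a. Qed.
Lemma linN : {morph f : x / - x}. Proof. exact: linearN F. Qed.

End LinearFunctions.

Section Forms.
Variables (K : fieldType) (C : lmodType K).

Lemma linform_linear (g : C -> K) : linform g -> linear (g : C -> K^o).
Proof. by []. Qed.

Lemma bilinform0l (b : C -> C -> K) w : bilinform b -> b 0 w = 0.
Proof. by case=> bl _; exact: lin0 (linform_linear (bl w)). Qed.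

Lemma bilinform0r (b : C -> C -> K) w : bilinform b -> b w 0 = 0.
Proof. by case=> _ br; exact: lin0 (linform_linear (br w)). Qed.

Lemma trilinform0m (g : C -> C -> C -> K) x z : trilinform g -> g x 0 z = 0.
Proof. by case=> _ [gm _]; exact: lin0 (linform_linear (gm x z)). Qed.

Lemma trilinform0r (g : C -> C -> C -> K) x y : trilinform g -> g x y 0 = 0.
Proof. by case=> _ [_ gr]; exact: lin0 (linform_linear (gr x y)). Qed.

End Forms.

Section Brackets.
Variables (K : fieldType) (L : lmodType K).

Section Trilinear.
Variable br : L -> L -> L -> L.
Hypothesis br_tri : trilin_L br.

Lemma bracket0l y z : br 0 y z = 0. Proof. exact: lin0 (br_tri.1 y z). Qed.
Lemma bracket0m x z : br x 0 z = 0. Proof. exact: lin0 (br_tri.2.1 x z). Qed.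
Lemma bracket0r x y : br x y 0 = 0. Proof. exact: lin0 (br_tri.2.2 x y). Qed.
Lemma bracketDl u v y z : br (u + v) y z = br u y z + br v y z.
Proof. exact: linD (br_tri.1 y z) u v. Qed.
Lemma bracketZl a u y z : br (a *: u) y z = a *: br u y z.
Proof. exact: linZ (br_tri.1 y z) a u. Qed.
Lemma bracketNl u y z : br (- u) y z = - br u y z.
Proof. exact: linN (br_tri.1 y z) u. Qed.
Lemma bracketNm x u z : br x (- u) z = - br x u z.
Proof. exact: linN (br_tri.2.1 x z) u. Qed.
Lemma bracketNr x y u : br x y (- u) = - br x y u.
Proof. exact: linN (br_tri.2.2 x y) u. Qed.

End Trilinear.

Definition opp_bracket (br : L -> L -> L -> L) (x y z : L) : L := - br x z y.

Lemma opp_bracket_trilin br : trilin_L br -> trilin_L (opp_bracket br).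
Proof.
case=> [bl [bm b_r]]; rewrite /opp_bracket.
by split; [|split] => ? ? a u v; rewrite ?bl ?bm ?b_r opprD scalerN.
Qed.

Lemma is_3Leibniz_opp br : is_3Leibniz br -> is_3Leibniz (opp_bracket br).
Proof.
case=> br_tri Leib; split; first exact: opp_bracket_trilin.
move=> x1 x2 x3 y1 y2; rewrite /opp_bracket.
rewrite !(bracketNl br_tri, bracketNm br_tri, bracketNr br_tri) !opprK Leib.
by rewrite -!addrA; congr (_ + _); rewrite addrC.
Qed.

End Brackets.

Section Lbar.
Variables (K : fieldType) (L : lmodType K).

Local Notation Lbar1 := (((1 : K^o), (0 : L)) : Lbar L).
Local Notation inL x := (((0 : K^o), x) : Lbar L).

Lemma Lbar0E : (0 : Lbar L) = ((0 : K^o), 0).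
Proof. by []. Qed.

Lemma Lbar_addE (a b : K) (x y : L) :
  ((a, x) : Lbar L) + (b, y) = ((a + b : K^o), x + y).
Proof. by []. Qed.

Lemma Lbar_scaleE (a b : K) (x : L) : a *: ((b, x) : Lbar L) = ((a * b : K^o), a *: x).
Proof. by []. Qed.

Lemma Lbar_pairE (a : K) (x : L) : ((a, x) : Lbar L) = a *: Lbar1 + inL x.
Proof. by rewrite Lbar_scaleE Lbar_addE mulr1 scaler0 addr0 add0r. Qed.

Lemma inL_linear : linear (fun x : L => inL x).
Proof. by move=> a x y; rewrite Lbar_scaleE Lbar_addE mulr0 addr0. Qed.

Lemma tev2_Lbar_cop (b : Lbar L -> Lbar L -> K) u :
  tev2 b (Lbar_cop u) = b u Lbar1 + b Lbar1 (inL u.2).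
Proof. by rewrite /tev2 big_cons big_seq1. Qed.

Lemma Lbar_cocom_coalgebra : is_cocom_coalgebra (@Lbar_cop K L) (@Lbar_eps K L).
Proof.
split.
- move=> b [bl bm] a u v; rewrite !tev2_Lbar_cop bl /= inL_linear bm.
  by rewrite mulrDr addrACA.
- by [].
- move=> g g_tri [u1 u2]; rewrite /tev3 /cop2 /cop2' /Lbar_cop /= !big_cons !big_nil.
  by rewrite -Lbar0E (trilinform0m _ _ g_tri) (trilinform0r _ _ g_tri) !addr0 add0r addrA.
- split=> -[u1 u2]; rewrite !big_cons big_nil /Lbar_eps /= !addr0.
  + by rewrite scale1r -Lbar_pairE.
  + by rewrite scale1r scale0r addr0.
- move=> b [bl bm] [u1 u2]; rewrite tev2_Lbar_cop /tev2 big_cons big_seq1 /=.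
  by rewrite [(u1, u2)]Lbar_pairE bl bm addrAC.
Qed.

Local Ltac Lbar_T_simpl br_tri :=
  rewrite /Lbar_T /= ?(mul0r, mulr0, mul1r, mulr1, scale0r, scaler0, scale1r,
    add0r, addr0, bracket0l br_tri, bracket0m br_tri, bracket0r br_tri).

Section Operator.
Variable br : L -> L -> L -> L.
Hypothesis br_tri : trilin_L br.

Local Notation T := (Lbar_T br).

Lemma Lbar_T_trilinmap : trilinmap T.
Proof.
case: br_tri => bl [bm b_r]; split; [|split].
- move=> [y1 y2] [z1 z2] a [u1 u2] [v1 v2].
  rewrite /Lbar_T !Lbar_scaleE !Lbar_addE /=; congr (_, _); first by ring.
  by rewrite bl !scalerDr !scalerA [_ * a]mulrC addrACA.
- move=> [x1 x2] [z1 z2] a [u1 u2] [v1 v2].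
  rewrite /Lbar_T !Lbar_scaleE !Lbar_addE /=; congr (_, _); first by ring.
  by rewrite bm mulrDl scalerDl scalerDr scalerA !mulrA addrACA.
- move=> [x1 x2] [y1 y2] a [u1 u2] [v1 v2].
  rewrite /Lbar_T !Lbar_scaleE !Lbar_addE /=; congr (_, _); first by ring.
  by rewrite b_r mulrDr scalerDl scalerDr scalerA [y1 * (a * _)]mulrCA addrACA.
Qed.

Lemma Lbar_T_coalg_morph : is_coalg_morph3 (@Lbar_cop K L) (@Lbar_eps K L) T.
Proof.
split; [exact: Lbar_T_trilinmap | by [] |].
move=> b b_bil [x1 x2] [y1 y2] [z1 z2].
rewrite tev2_Lbar_cop /Lbar_cop !big_cons !big_nil.
Lbar_T_simpl br_tri; rewrite -Lbar0E !(bilinform0r _ b_bil) !addr0 !add0r.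
case: (b_bil) => bl bm; congr (_ + _).
by rewrite inL_linear bm [(y1 * z1, 0)]Lbar_pairE bl -Lbar0E (bilinform0l _ b_bil) addr0.
Qed.
End Operator.

Lemma Lbar_T_shelf br : is_3Leibniz br ->
  is_trilinear_shelf (@Lbar_cop K L) (@Lbar_eps K L) (Lbar_T br).
Proof.
case=> br_tri Leib; split; [exact: Lbar_cocom_coalgebra | exact: Lbar_T_coalg_morph |].
move=> [x1 x2] [y1 y2] [z1 z2] [u1 u2] [v1 v2].
rewrite /cop2 /Lbar_cop /= !big_cons !big_nil.
Lbar_T_simpl br_tri; rewrite !Lbar_addE !addr0; congr (_, _); first by ring.
rewrite !(bracketDl br_tri, bracketZl br_tri) Leib !scalerDr !scalerA -!addrA.
by rewrite [(u1 * v1) * _]mulrC /= [(u1 * v1) *: _ + _]addrCA.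
Qed.

Lemma Lbar_TK br br' : trilin_L br -> trilin_L br' ->
    (forall x y z, br' x z y = - br x y z) ->
  forall x y z : Lbar L,
    \sum_(py <- Lbar_cop y) \sum_(pz <- Lbar_cop z)
      Lbar_T br' (Lbar_T br x py.2 pz.2) pz.1 py.1 = (Lbar_eps y * Lbar_eps z) *: x.
Proof.
move=> br_tri br'_tri br'_opp [x1 x2] [y1 y2] [z1 z2].
rewrite /Lbar_cop /Lbar_eps /= !big_cons !big_nil.
Lbar_T_simpl br_tri; Lbar_T_simpl br'_tri.
rewrite Lbar_addE Lbar_scaleE br'_opp subrK addr0.
by congr (_, _); [ring | rewrite mulrC].
Qed.
End Lbar.

Theorem theorem4p1 (K : fieldType) (L : lmodType K) (br : L -> L -> L -> L) :
  is_3Leibniz br ->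
  is_trilinear_rack (@Lbar_cop K L) (@Lbar_eps K L) (Lbar_T br).
Proof.
move=> Leib; have [br_tri _] := Leib.
have opp_tri := opp_bracket_trilin br_tri.
split; first exact: Lbar_T_shelf.
exists (Lbar_T (opp_bracket br)); split; first exact/Lbar_T_shelf/is_3Leibniz_opp.
move=> x y z; split; apply: Lbar_TK => // x' y' z'.
by rewrite /opp_bracket opprK.
Qed.
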